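(* Let $G$ be a second countable locally compact abelian group, let $\varLambda\subseteq G$ be uniformly discrete, and let $\mathcal{A}=(A_n)_n$ be a van Hove sequence such that $\varLambda$ has positive density with respect to $\mathcal{A}$, i.e. $\liminf_{n\to\infty}\frac{\mathrm{card}(\varLambda\cap A_n)}{\mathrm{vol}(A_n)}>0$. Put $F_n=\varLambda\cap A_n$. (a) If $\gamma_{\mathrm{count}}$ is any vague cluster point of $(\gamma_{F_n})_n$, then there exist $C\in(0,\infty)$ and a vague cluster point $\gamma_{\mathrm{dens}}$ of $(\gamma_n)_n$ such that $\gamma_{\mathrm{dens}}=C\gamma_{\mathrm{count}}$. (b) If $\gamma_{\mathrm{dens}}$ is any vague cluster point of $(\gamma_n)_n$, then there exist $D\in(0,\infty)$ and a vague cluster point $\gamma_{\mathrm{count}}$ of $(\gamma_{F_n})_n$ such that $\gamma_{\mathrm{count}}=D\gamma_{\mathrm{dens}}$.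
   Context: $\mathrm{vol}$ is Haar measure. $\varLambda$ is uniformly discrete if there is a nonempty open $U\subseteq G$ such that every translate $t+U$ contains at most one point of $\varLambda$. A van Hove sequence is a sequence $(A_n)_n$ of compact sets of positive Haar measure with $\mathrm{vol}(\partial^K A_n)/\mathrm{vol}(A_n)\to0$ for every compact $K$, where $\partial^K A=((A+K)\setminus A^\circ)\cup((\overline{G\setminus A}-K)\cap A)$. For a finite set $F$, $\gamma_F=\frac{1}{\mathrm{card}(F)}\sum_{x,y\in F}\delta_{x-y}$ if $F\ne\emptyset$, $\gamma_\emptyset=0$; and $\gamma_n=\frac{1}{\mathrm{vol}(A_n)}\sum_{x,y\in F_n}\delta_{x-y}$. Cluster points are taken in the vague topology. *)

From HB Require Import structures.
From mathcomp Require Import all_boot all_order all_algebra.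
From mathcomp Require Import all_classical all_reals all_analysis.
Set Implicit Arguments. Unset Strict Implicit. Unset Printing Implicit Defensive.
Import Order.TTheory GRing.Theory Num.Theory.
Import numFieldNormedType.Exports.
Local Open Scope classical_set_scope.
Local Open Scope ring_scope.

Definition borelG (G : topologicalZmodType) : Type := G.
Section BorelInstance.
Context (G : topologicalZmodType).
HB.instance Definition _ := Choice.on (borelG G).
HB.instance Definition _ := isPointed.Build (borelG G) (0 : G)%R.
HB.instance Definition _ := @isMeasurable.Build (sigma_display (@open G))
  (borelG G) <<s @open G >> (@sigma_algebra0 _ setT _) (@sigma_algebraC _ _)
  (@sigma_algebra_bigcup _ setT _).
End BorelInstance.

Section Defs.
Context (R : realType) (G : topologicalZmodType).

(* Haar measure on a locally compact abelian group: a Borel measure that is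
   translation invariant, finite on compact sets and positive on nonempty
   open sets (on a second countable LCH space such a measure is Radon). *)
Definition haar_measure (mu : {measure set (borelG G) -> \bar R}) : Prop :=
  [/\ (forall (x : G) (A : set G), @measurable _ (borelG G) A ->
         mu [set x + a | a in A] = mu A),
      (forall K : set G, compact K -> (mu K < +oo)%E) &
      (forall U : set G, open U -> U !=set0 -> (0 < mu U)%E)].

Definition Cc (f : G -> R) : Prop :=
  continuous f /\ compact (closure [set x | f x != 0]).

Definition uniformly_discrete (L : set G) : Prop :=
  exists U : set G, [/\ open U, U !=set0 &
    forall (t x y : G), L x -> L y ->
      [set t + u | u in U] x -> [set t + u | u in U] y -> x = y].

Definition cardR (F : set G) : R := \sum_(x \in F) (1 : R).

Definition vH_boundary (K A : set G) : set G :=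
  ([set a + k | a in A & k in K] `\` interior A) `|`
  ([set b - k | b in closure (~` A) & k in K] `&` A).

Definition van_Hove (mu : {measure set (borelG G) -> \bar R})
    (A : nat -> set G) : Prop :=
  (forall n, compact (A n) /\ (0 < mu (A n))%E) /\
  (forall K : set G, compact K ->
     (fun n => fine (mu (vH_boundary K (A n))) / fine (mu (A n))) @ \oo
       --> (0 : R)).

Definition pos_density (mu : {measure set (borelG G) -> \bar R})
    (L : set G) (A : nat -> set G) : Prop :=
  (0 < limn_einf (fun n => (cardR (L `&` A n) / fine (mu (A n)))%:E))%E.

(* gamma_F, seen through its action on test functions:
   gamma_F(f) = 1/card F * sum_{x,y in F} f(x - y), gamma_emptyset = 0. *)
Definition gamma_count (F : set G) (f : G -> R) : R :=
  if cardR F == 0 then 0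
  else (cardR F)^-1 * \sum_(x \in F) \sum_(y \in F) f (x - y).

Definition gamma_dens (mu : {measure set (borelG G) -> \bar R})
    (L : set G) (A : nat -> set G) (n : nat) (f : G -> R) : R :=
  (fine (mu (A n)))^-1 *
    \sum_(x \in L `&` A n) \sum_(y \in L `&` A n) f (x - y).

(* nu (a Radon measure, i.e. a Borel measure finite on compact sets) is a
   cluster point of the sequence of measures s (given by their integrals
   against test functions) for the vague topology, i.e. the weak topology
   induced by the maps  mu |-> int f dmu,  f in C_c(G): every basic vague
   neighbourhood of nu is visited by s infinitely often. *)
Definition vague_cluster (s : nat -> (G -> R) -> R)
    (nu : {measure set (borelG G) -> \bar R}) : Prop :=
  (forall K : set G, compact K -> (nu K < +oo)%E) /\
  (forall (k : nat) (fs : 'I_k -> G -> R) (eps : R),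
     (forall i, Cc (fs i)) -> 0 < eps ->
     forall N : nat, exists2 n : nat, (N <= n)%N &
       forall i, (`| (s n (fs i))%:E - \int[nu]_x (fs i x)%:E | < eps%:E)%E).

End Defs.

From HB Require Import structures.
From mathcomp Require Import all_boot all_order all_algebra.
From mathcomp Require Import all_classical all_reals all_analysis.
From mathcomp Require Import ring lra measurable_realfun.
Import Order.TTheory GRing.Theory Num.Theory.
Import numFieldNormedType.Exports.
Local Open Scope classical_set_scope.
Local Open Scope ring_scope.
Set Implicit Arguments. Unset Strict Implicit. Unset Printing Implicit Defensive.

(* Let d_n = card F_n / vol A_n, so that gamma_n = d_n gamma_{F_n} as soon as
   F_n is nonempty.  Positive density bounds d_n from below eventually.
   Uniform discreteness yields an open V such that the translates x + V,
   x in F_n, are disjoint and contained in A_n + W for a compact W; the van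
   Hove property gives vol (A_n + W) <= 2 vol A_n eventually, hence
   d_n <= 2 / vol V.  So d_n eventually lies in a compact [a, b] with a > 0,
   and along the indices at which gamma_{F_n} approaches gamma_count, d_n has a
   cluster value C in [a, b]: then C gamma_count is a vague cluster point of
   (gamma_n).  Part (b) is the same argument applied to 1 / d_n. *)

Section TopologicalZmodule.
Context (G : topologicalZmodType).

Lemma addr_continuous (x : G) : continuous (+%R^~ x).
Proof.
move=> y; apply: (cvg_comp (fun y => (y, x)) (fun p : G * G => p.1 + p.2)
  (G := nbhs (y, x))); last exact: (@add_continuous G (y, x)).
by apply: cvg_pair; [exact: cvg_id | exact: cvg_cst].
Qed.

Lemma open_translate (x : G) (U : set G) : open U -> open [set x + u | u in U].
Proof.
have -> : [set x + u | u in U] = +%R^~ (- x) @^-1` U.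
  apply/seteqP; split => [_ [u Uu <-]|y Uy] /=; first by rewrite addrC addKr.
  by exists (y - x) => //; rewrite addrC subrK.
exact/(continuousP _).1/addr_continuous.
Qed.

Lemma open_opp (U : set G) : open U -> open [set - u | u in U].
Proof.
have -> : [set - u | u in U] = -%R @^-1` U.
  apply/seteqP; split => [_ [u Uu <-]|y Uy] /=; first by rewrite opprK.
  by exists (- y); rewrite ?opprK.
exact/(continuousP _).1/opp_continuous.
Qed.

Lemma compact_add (A K : set G) : compact A -> compact K ->
  compact [set a + k | a in A & k in K].
Proof.
move=> cA cK; rewrite image2E.
apply: continuous_compact; last exact: compact_setX.
apply: continuous_subspaceT => p.
have -> : uncurry +%R = (fun p : G * G => p.1 + p.2) by apply/funext => -[].
exact: add_continuous.
Qed.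

(* For z in the closure, the k in K with f - k near z for some f in F
   cluster at some k0 in K, and then z + k0 lies in the closure of F. *)
Lemma closed_sub_compact (F K : set G) : closed F -> compact K ->
  closed [set b - k | b in F & k in K].
Proof.
move=> cF cK z zcl.
pose B (N : set G) := [set k | K k /\ exists2 f, F f & N (f - k)].
pose FF := filter_from (nbhs z) B.
have FFf : Filter FF.
  apply: filter_from_filter; first by exists setT; exact: filterT.
  move=> N1 N2 h1 h2; exists (N1 `&` N2); first exact: filterI.
  by move=> k [Kk [f Ff [n1 n2]]]; split; split => //; exists f.
have PF : ProperFilter FF.
  apply: filter_from_proper => // N Nz.
  have [_ [[f Ff [k Kk <-]] Nfk]] := zcl N Nz.
  by exists k; split => //; exists f.
have FK : FF K by exists setT => //; [exact: filterT | move=> k []].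
have [k0 [Kk0 clk0]] := cK FF PF FK.
have Fzk : F (z + k0).
  apply: cF => M Mzk.
  have [[N P] /= [Nz Pk] sub] := @add_continuous G (z, k0) M Mzk.
  have [k [[Kk [f Ff Nfk]] Pk']] :=
    clk0 (B N) P (ex_intro2 _ _ N Nz (fun _ h => h)) Pk.
  exists f; split => //.
  by have /= := sub (f - k, k) (conj Nfk Pk'); rewrite subrK.
by exists (z + k0) => //; exists k0 => //; rewrite addrK.
Qed.

Lemma uniformly_discrete_disjoint_translates (L : set G) :
  locally_compact [set: G] -> uniformly_discrete L ->
  exists V W : set G, [/\ open V, V !=set0, V `<=` W, compact W &
    forall x y, L x -> L y ->
      [set x + v | v in V] `&` [set y + v | v in V] !=set0 -> x = y].
Proof.
move=> lc [U [oU [u0 Uu0] disc]].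
have [W Wn [cW clW]] := lc (- u0) I.
have nW : nbhs (- u0) W by move: Wn; rewrite withinET.
exists ([set - u | u in U] `&` interior W), W; split.
- by apply: openI; [exact: open_opp | exact: open_interior].
- by exists (- u0); split; [exists u0 | exact: nW].
- by move=> y [_ /interior_subset].
- exact: cW.
- move=> x y Lx Ly [z [[v1 [[u1 U1 <-] _] e1] [v2 [[u2 U2 <-] _] e2]]].
  apply: (disc z) => //.
  + by exists u1 => //; rewrite -e1 subrK.
  + by exists u2 => //; rewrite -e2 subrK.
Qed.

End TopologicalZmodule.

Section BorelSets.
Context (G : topologicalZmodType).

Lemma open_measurableG (U : set G) : open U -> @measurable _ (borelG G) U.
Proof. by move=> oU; apply: sub_sigma_algebra. Qed.

Lemma closed_measurableG (U : set G) : closed U -> @measurable _ (borelG G) U.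
Proof.
move=> cU; rewrite -(setCK U); apply: (@measurableC _ (borelG G)).
by apply: open_measurableG; exact: closed_openC.
Qed.

Lemma compact_measurableG (A : set G) :
  hausdorff_space G -> compact A -> @measurable _ (borelG G) A.
Proof. by move=> hG cA; apply: closed_measurableG; exact: compact_closed. Qed.

Lemma continuous_measurableG (R : realType) (f : G -> R) : continuous f ->
  measurable_fun (setT : set (borelG G)) (f : borelG G -> R).
Proof.
move=> /continuousP cf; apply: (measurability _ (RGenOpens.measurableE R)).
move=> _ [_ [a [b ->] <-]]; rewrite setTI.
by apply: open_measurableG; apply: cf; exact: interval_open.
Qed.

End BorelSets.

Lemma integral_mscale (R : realType) d (T : measurableType d)
    (mu : {measure set T -> \bar R}) (k : {nonneg R}) (f : T -> R) :
  measurable_fun setT f -> (\int[mu]_x (f x)%:E)%E \is a fin_num ->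
  (\int[mscale k mu]_x (f x)%:E = k%:num%:E * \int[mu]_x (f x)%:E)%E.
Proof.
move=> mf; rewrite (integralE (mscale k mu)) (integralE mu).
rewrite fin_numB => /andP[p q].
have mEf : measurable_fun setT (EFin \o f) by exact/measurable_EFinP.
rewrite !ge0_integral_mscale //=.
- by rewrite [RHS]muleBr //; exact: fin_num_adde_defr p.
- exact: measurable_funeneg.
- exact: measurable_funepos.
Qed.

Section Packing.
Context (R : realType) (G : topologicalZmodType).
Context (vol : {measure set (borelG G) -> \bar R}).
Hypotheses (hG : hausdorff_space G) (haar : haar_measure vol).

Lemma cardR_neq0_finite (F : set G) : cardR R F != 0 -> finite_set F.
Proof.
apply: contra_neqP => infF; rewrite /cardR fsbig_dflt //.
apply: contra_not infF; apply: sub_finite_set => x Fx.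
by split => //= /eqP; rewrite oner_eq0.
Qed.

Lemma cardR_packing_le (F A V W : set G) : finite_set F -> F `<=` A ->
  open V -> V `<=` W -> compact W -> compact A ->
  (forall x y, F x -> F y ->
     [set x + v | v in V] `&` [set y + v | v in V] !=set0 -> x = y) ->
  ((cardR R F)%:E * vol V <= vol [set (a + k)%R | a in A & k in W])%E.
Proof.
move=> finF FA oV VW cW cA disc; have [hinv _ _] := haar.
have mV x : @measurable _ (borelG G) [set x + v | v in V].
  by apply: open_measurableG; exact: open_translate.
have -> : ((cardR R F)%:E * vol V)%E =
          vol (\bigcup_(x in F) [set x + v | v in V]).
  rewrite (measure_fin_bigcup vol finF) // /cardR -fsumEFin // ge0_mule_fsuml //.
  apply: eq_fsbigr => x _; rewrite mul1e; symmetry.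
  by apply: hinv; exact: open_measurableG.
apply: le_measure; rewrite ?inE.
- by apply: fin_bigcup_measurable.
- by apply: compact_measurableG => //; exact: compact_add.
- by move=> _ [x Fx [v Vv <-]]; exists x; [exact: FA | exists v => //; exact: VW].
Qed.

Lemma measurable_vH_boundary (K A : set G) : compact K -> compact A ->
  @measurable _ (borelG G) (vH_boundary K A).
Proof.
move=> cK cA; have mA := compact_measurableG hG cA.
apply: (@measurableU _ (borelG G)); apply: (@measurableI _ (borelG G)) => //.
- by apply: compact_measurableG => //; exact: compact_add.
- apply: (@measurableC _ (borelG G)).
  by apply: open_measurableG; exact: open_interior.
- apply: closed_measurableG.
  by apply: closed_sub_compact => //; exact: closed_closure.
Qed.

Lemma measure_add_le_vH_boundary (K A : set G) : compact K -> compact A ->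
  (vol [set (a + k)%R | a in A & k in K] <= vol A + vol (vH_boundary K A))%E.
Proof.
move=> cK cA; have mA := compact_measurableG hG cA.
have mB := measurable_vH_boundary cK cA.
apply: le_trans (measureU2 _ _ _) => //; apply: le_measure; rewrite ?inE //.
- by apply: compact_measurableG => //; exact: compact_add.
- exact: (@measurableU _ (borelG G)).
- move=> z AKz; have [Az|nAz] := pselect (interior A z).
    by left; exact: interior_subset.
  by right; left; split.
Qed.

Lemma vH_boundary_finite (K A : set G) : compact K -> compact A ->
  (vol (vH_boundary K A) < +oo)%E.
Proof.
move=> cK cA; have [_ hfin _] := haar.
have cAK := compact_add cA cK.
apply: le_lt_trans (hfin _ (compactU cAK cA)).
apply: le_measure; rewrite ?inE.
- exact: measurable_vH_boundary.
- by apply: compact_measurableG => //; exact: compactU.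
- by move=> z [[? _]|[_ ?]]; [left|right].
Qed.

End Packing.

Lemma limn_einf_gt0 (R : realType) (u : nat -> R) :
  (0 < limn_einf (fun n => (u n)%:E))%E ->
  exists2 a : R, 0 < a & exists N, forall n, (N <= n)%N -> a <= u n.
Proof.
rewrite limn_einf_lim (cvg_lim _ (@cvg_einfs_sup R _)) //.
move=> /ereal_sup_gt [_ [N _ <-]] infN_gt0.
have infN_le n : (N <= n)%N -> (einfs (fun n => (u n)%:E) N <= (u n)%:E)%E.
  by move=> Nn; apply: ereal_inf_lbound; exists n.
move: infN_gt0 infN_le; case: (einfs _ N) => [e| |] // e_gt0 infN_le.
- by exists e; [rewrite -lte_fin | exists N => n /infN_le; rewrite lee_fin].
- by have := infN_le N (leqnn N); rewrite leye_eq.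
Qed.

Section SampleDensity.
Context (R : realType) (G : topologicalZmodType).
Context (vol : {measure set (borelG G) -> \bar R}) (L : set G) (A : nat -> set G).

Definition sample_density (n : nat) : R := cardR R (L `&` A n) / fine (vol (A n)).

Lemma gamma_dens_count n f : cardR R (L `&` A n) != 0 ->
  gamma_dens vol L A n f = sample_density n * gamma_count (L `&` A n) f.
Proof.
move=> c0; rewrite /gamma_dens /gamma_count /sample_density (negbTE c0).
by rewrite [_ / _]mulrC -mulrA mulVKf.
Qed.

Lemma sample_density_ub : hausdorff_space G -> locally_compact [set: G] ->
  haar_measure vol -> uniformly_discrete L -> van_Hove vol A ->
  exists b N, forall n, (N <= n)%N -> sample_density n <= b.
Proof.
move=> hG lc haar ud [vA vH]; have [_ hfin hpos] := haar.
have [V [W [oV [v0 Vv0] VW cW disc]]] :=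
  uniformly_discrete_disjoint_translates lc ud.
have VE : vol V = (fine (vol V))%:E.
  rewrite fineK // ge0_fin_numE //; apply: le_lt_trans (hfin _ cW).
  apply: le_measure; rewrite ?inE //.
  - exact: open_measurableG.
  - exact: compact_measurableG.
have v_gt0 : 0 < fine (vol V).
  by rewrite -lte_fin -VE; apply: hpos => //; exists v0.
have /cvgr_dist_lt /(_ _ ltr01) [N _ vHN] := vH W cW.
exists (2 / fine (vol V)), N => n Nn.
have [cAn An_gt0] := vA n.
have AnE : vol (A n) = (fine (vol (A n)))%:E.
  by rewrite fineK // ge0_fin_numE // hfin.
have an_gt0 : 0 < fine (vol (A n)) by rewrite -lte_fin -AnE.
have BnE : vol (vH_boundary W (A n)) = (fine (vol (vH_boundary W (A n))))%:E.
  by rewrite fineK // ge0_fin_numE // vH_boundary_finite.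
have Bn_le : fine (vol (vH_boundary W (A n))) <= fine (vol (A n)).
  move: (vHN n Nn); rewrite sub0r normrN => /(le_lt_trans (ler_norm _)).
  by rewrite ltr_pdivrMr // mul1r => /ltW.
have [c0|c_neq0] := eqVneq (cardR R (L `&` A n)) 0.
  by rewrite /sample_density c0 mul0r divr_ge0 // ltW.
have := cardR_packing_le hG haar (cardR_neq0_finite c_neq0) (@subIsetr _ _ _)
  oV VW cW cAn (fun x y Fx Fy => disc x y Fx.1 Fy.1).
move=> /le_trans /(_ (measure_add_le_vH_boundary vol hG cW cAn)).
rewrite VE AnE BnE -EFinM -EFinD lee_fin => cv_le.
rewrite /sample_density ler_pdivrMr // mulrC mulrA ler_pdivlMr //; lra.
Qed.

End SampleDensity.

Lemma normr_mulB_lt (R : realFieldType) (d c x y b m e : R) :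
  0 <= d <= b -> `|y| <= m -> 0 < e ->
  `|x - y| < e / (2 * (b + 1)) -> `|c - d| < e / (2 * (m + 1)) ->
  `|d * x - c * y| < e.
Proof.
move=> /andP[d_ge0 d_le] y_le e_gt0 xy_lt cd_lt.
have m_ge0 : 0 <= m := le_trans (normr_ge0 _) y_le.
have b_ge0 : 0 <= b := le_trans d_ge0 d_le.
have dxy_le : d * `|x - y| <= b * (e / (2 * (b + 1))) by rewrite ler_pM // ltW.
have cdy_le : `|c - d| * `|y| <= e / (2 * (m + 1)) * m by rewrite ler_pM // ltW.
have half_lt (z : R) : 0 <= z -> z * (e / (2 * (z + 1))) < e / 2.
  move=> z_ge0; rewrite mulrC -mulrA ltr_pM2l ?divr_gt0 //.
  by rewrite mulrC ltr_pdivrMr ?mulr_gt0 //; nra.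
have -> : d * x - c * y = d * (x - y) + (d - c) * y by ring.
rewrite (splitr e); apply: (le_lt_trans (ler_normD _ _)).
rewrite !normrM (ger0_norm d_ge0) [`|d - c|]distrC; apply: ltr_leD.
  exact: le_lt_trans dxy_le (half_lt _ b_ge0).
by apply: ltW; apply: le_lt_trans cdy_le _; rewrite mulrC half_lt.
Qed.

Section ClusterScaling.
Context (R : realType) (T : Type) (P : T -> Prop).

Definition cluster_on (s : nat -> T -> R) (J : T -> \bar R) : Prop :=
  forall (k : nat) (fs : 'I_k -> T) (eps : R),
    (forall i, P (fs i)) -> 0 < eps ->
    forall N : nat, exists2 n : nat, (N <= n)%N &
      forall i, (`| (s n (fs i))%:E - J (fs i)| < eps%:E)%E.

Lemma cluster_on_fin_num s J f : cluster_on s J -> P f -> J f \is a fin_num.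
Proof.
move=> cl Pf; have [n _ /(_ ord0)] := cl 1%N (fun=> f) 1 (fun=> Pf) ltr01 0%N.
by case: (J f).
Qed.

Record probe := Probe {
  probe_size : nat;
  probe_fun : 'I_probe_size -> T;
  probe_eps : R;
  probe_start : nat }.
Arguments probe_fun : clear implicits.

Definition probe_ok (p : probe) : Prop :=
  (forall i, P (probe_fun p i)) /\ 0 < probe_eps p.

Definition probe_hits s J (p : probe) : set nat :=
  [set n | (probe_start p <= n)%N /\ forall i,
     (`| (s n (probe_fun p i))%:E - J (probe_fun p i)| < (probe_eps p)%:E)%E].

Lemma probe_hits_meet s J p1 p2 : probe_ok p1 -> probe_ok p2 ->
  exists2 p, probe_ok p &
    probe_hits s J p `<=` probe_hits s J p1 `&` probe_hits s J p2.
Proof.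
case: p1 p2 => k1 f1 e1 N1 [k2 f2 e2 N2] [/= Pf1 e1_gt0] [/= Pf2 e2_gt0].
pose f i := match fintype.split i with inl i1 => f1 i1 | inr i2 => f2 i2 end.
have f_lshift i : f (lshift k2 i) = f1 i by rewrite /f (unsplitK (inl i)).
have f_rshift i : f (rshift k1 i) = f2 i by rewrite /f (unsplitK (inr i)).
exists (Probe f (Num.min e1 e2) (maxn N1 N2)).
  split => /=; last by rewrite lt_min e1_gt0.
  by move=> i; rewrite /f; case: (fintype.split i).
move=> n [/= Nn fn_lt]; split; split => /=.
- exact: leq_trans (leq_maxl _ _) Nn.
- move=> i; rewrite -f_lshift; apply: (lt_le_trans (fn_lt _)).
  by rewrite lee_fin ge_min lexx.
- exact: leq_trans (leq_maxr _ _) Nn.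
- move=> i; rewrite -f_rshift; apply: (lt_le_trans (fn_lt _)).
  by rewrite lee_fin ge_min lexx orbT.
Qed.

Lemma cluster_on_hits s J p :
  cluster_on s J -> probe_ok p -> probe_hits s J p !=set0.
Proof.
case: p => k f e N cl [/= Pf e_gt0].
by have [n Nn fn_lt] := cl k f e Pf e_gt0 N; exists n.
Qed.

(* C is a cluster point in [a, b] of d along the filter generated by the
   index sets probe_hits s J p. *)
Lemma cluster_on_value s J (d : nat -> R) (a b : R) N0 : cluster_on s J ->
  (forall n, (N0 <= n)%N -> a <= d n <= b) ->
  exists2 C, a <= C <= b & forall p, probe_ok p -> forall delta : R, 0 < delta ->
    exists2 n, probe_hits s J p n & `|C - d n| < delta.
Proof.
move=> cl dab.
pose F := filter_from probe_ok (fun p => d @` probe_hits s J p).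
have f0 : 'I_0 -> T by case=> ?; rewrite ltn0.
have probe0 N : probe_ok (Probe f0 1 N) by split => //; case.
have FF : ProperFilter F.
  apply: filter_from_proper; last first.
    by move=> p /(cluster_on_hits cl) [n hit_n]; exists (d n), n.
  apply: filter_from_filter; first by exists (Probe f0 1 0); exact: probe0.
  move=> p1 p2 ok1 ok2; have [p ok hits_sub] := probe_hits_meet s J ok1 ok2.
  by exists p => // _ [n /hits_sub[hit1 hit2] <-]; split; exists n.
have Fab : F `[a, b]%classic by exists (Probe f0 1 N0) => // _ [n [/dab ? _] <-].
have [C [abC clC]] := segment_compact FF Fab.
exists C => [|p ok delta delta_gt0]; first by move: abC; rewrite /= in_itv.
have [_ [[n hit_n <-] Cdn]] := clC _ _ (ex_intro2 _ _ p ok (fun _ h => h))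
  (nbhsx_ballx C delta delta_gt0).
by exists n.
Qed.

Lemma cluster_on_scale s u J (d : nat -> R) (a b : R) N0 :
  cluster_on s J -> 0 < a ->
  (forall n, (N0 <= n)%N -> a <= d n <= b) ->
  (forall n, (N0 <= n)%N -> forall f, u n f = d n * s n f) ->
  exists2 C, a <= C & cluster_on u (fun f => C%:E * J f)%E.
Proof.
move=> cl a_gt0 dab us.
have [C /andP[aC _] C_cl] := cluster_on_value cl dab.
exists C => // k fs eps Pf eps_gt0 N.
have Jfin i : J (fs i) \is a fin_num := cluster_on_fin_num cl (Pf i).
pose m := \sum_i `|fine (J (fs i))|.
pose p := Probe fs (eps / (2 * (b + 1))) (maxn N N0).
have b_gt0 : 0 < b.
  have /andP[aN0 N0b] := dab N0 (leqnn _).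
  exact: lt_le_trans a_gt0 (le_trans aN0 N0b).
have ok : probe_ok p.
  by split; [exact: Pf | rewrite /= divr_gt0 // mulr_gt0 // addr_gt0].
have m_ge0 : 0 <= m by rewrite sumr_ge0.
have delta_gt0 : 0 < eps / (2 * (m + 1)).
  by rewrite divr_gt0 // mulr_gt0 // ltr_wpDl.
have [n [/= Nn fn_lt] Cdn] := C_cl p ok _ delta_gt0.
exists n => [|i]; first exact: leq_trans (leq_maxl _ _) Nn.
have N0n : (N0 <= n)%N := leq_trans (leq_maxr _ _) Nn.
have /andP[adn dnb] := dab n N0n.
have dn_bnd : 0 <= d n <= b by rewrite dnb (le_trans (ltW a_gt0) adn).
rewrite us // -(fineK (Jfin i)) -EFinM -EFinB lte_fin.
apply: normr_mulB_lt dn_bnd _ eps_gt0 _ Cdn.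
  by rewrite /m (bigD1 i) //= lerDl sumr_ge0.
by move: (fn_lt i); rewrite -(fineK (Jfin i)) -EFinB lte_fin.
Qed.

End ClusterScaling.

Lemma vague_cluster_scale (R : realType) (G : topologicalZmodType)
    (s u : nat -> (G -> R) -> R) (nu : {measure set (borelG G) -> \bar R})
    (d : nat -> R) (a b : R) (N0 : nat) :
  vague_cluster s nu -> 0 < a ->
  (forall n, (N0 <= n)%N -> a <= d n <= b) ->
  (forall n, (N0 <= n)%N -> forall f, u n f = d n * s n f) ->
  exists2 C : R, 0 < C & exists nu' : {measure set (borelG G) -> \bar R},
    vague_cluster u nu' /\
    forall B, @measurable _ (borelG G) B -> nu' B = (C%:E * nu B)%E.
Proof.
move=> [nu_fin nu_cl] a_gt0 dab us.
have {}nu_cl : cluster_on (@Cc R G) s (fun f => \int[nu]_x (f x)%:E)%E := nu_cl.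
have [C aC u_cl] := cluster_on_scale nu_cl a_gt0 dab us.
have C_gt0 : 0 < C := lt_le_trans a_gt0 aC.
exists C => //; exists (mscale (NngNum (ltW C_gt0)) nu); split => //; split.
  by move=> K cK; rewrite /mscale /= lte_mul_pinfty // nu_fin.
move=> k fs eps Pf eps_gt0 N; have [n Nn fn_lt] := u_cl k fs eps Pf eps_gt0 N.
exists n => // i; rewrite integral_mscale; first exact: fn_lt.
  by apply: continuous_measurableG; exact: (Pf i).1.
exact: cluster_on_fin_num nu_cl (Pf i).
Qed.

Theorem theorem3p10 (R : realType) (G : topologicalZmodType)
    (vol : {measure set (borelG G) -> \bar R})
    (L : set G) (A : nat -> set G) :
  hausdorff_space G -> locally_compact [set: G] -> @second_countable G ->
  haar_measure vol ->
  uniformly_discrete L ->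
  van_Hove vol A ->
  pos_density vol L A ->
  (forall gcount : {measure set (borelG G) -> \bar R},
     vague_cluster (fun n => gamma_count (L `&` A n)) gcount ->
     exists2 C : R, 0 < C &
       exists gdens : {measure set (borelG G) -> \bar R},
         vague_cluster (gamma_dens vol L A) gdens /\
         forall B : set G, @measurable _ (borelG G) B ->
           gdens B = (C%:E * gcount B)%E) /\
  (forall gdens : {measure set (borelG G) -> \bar R},
     vague_cluster (gamma_dens vol L A) gdens ->
     exists2 D : R, 0 < D &
       exists gcount : {measure set (borelG G) -> \bar R},
         vague_cluster (fun n => gamma_count (L `&` A n)) gcount /\
         forall B : set G, @measurable _ (borelG G) B ->
           gcount B = (D%:E * gdens B)%E).
Proof.
move=> hG lc _ haar ud vH pos.
have [b [Nb dn_le]] := sample_density_ub hG lc haar ud vH.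
have [a a_gt0 [Na dn_ge]] := limn_einf_gt0 pos.
pose dn := sample_density vol L A; pose N0 := maxn Na Nb.
have dn_bnd n : (N0 <= n)%N -> a <= dn n <= b.
  by move=> N0n; rewrite dn_ge ?dn_le // (leq_trans _ N0n) // ?leq_maxl ?leq_maxr.
have dn_gt0 n : (N0 <= n)%N -> 0 < dn n.
  by move=> /dn_bnd /andP[/(lt_le_trans a_gt0)].
have dens_count n : (N0 <= n)%N -> forall f,
    gamma_dens vol L A n f = dn n * gamma_count (L `&` A n) f.
  move=> /dn_gt0 dn_pos f; apply: gamma_dens_count.
  by apply: contraTneq dn_pos => c0; rewrite /dn /sample_density c0 mul0r ltxx.
split => [gc gc_cl | gd gd_cl].
  exact: vague_cluster_scale gc_cl a_gt0 dn_bnd dens_count.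
have b_gt0 : 0 < b.
  by have /andP[_] := dn_bnd N0 (leqnn _); apply: lt_le_trans (dn_gt0 N0 _).
apply: (vague_cluster_scale (d := fun n => (dn n)^-1) (a := b^-1) (b := a^-1)
  gd_cl).
- by rewrite invr_gt0.
- move=> n N0n; have /andP[adn dnb] := dn_bnd n N0n.
  by rewrite !lef_pV2 ?posrE ?adn ?dnb // dn_gt0.
- by move=> n N0n f; rewrite dens_count // mulKf // gt_eqF // dn_gt0.
Qed.
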